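(* Let $(\mathcal A;\mathcal E)$ be an exact category with exact coproducts, and let $B\xrightarrow{m^i}C^i\to A^i$, $i\in I$ ($I$ a set), be conflations with common first term $B$. Then the pushout $m=\amalg_B m^i:B\to\amalg_B C^i$ of the family $(m^i)_{i\in I}$ exists, and it is the inflation of the conflation obtained by pushing out the coproduct conflation $B^{(I)}\xrightarrow{\amalg_i m^i}\amalg_i C^i\to\amalg_i A^i$ along the sum morphism $s:B^{(I)}\to B$; in particular its cokernel is $\amalg_i A^i$.
   Context: An exact category $(\mathcal A;\mathcal E)$ is an additive category with a class of kernel–cokernel pairs (conflations) satisfying the Quillen–Keller axioms. It has exact coproducts if set-indexed coproducts exist in $\mathcal A$ and the coproduct of any set of conflations is a conflation. $B^{(I)}$ denotes the coproduct of $I$ copies of $B$ and $s:B^{(I)}\to B$ is the morphism restricting to $1_B$ on each copy. *)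

From HB Require Import structures.
From mathcomp Require Import all_boot all_algebra.

Set Implicit Arguments.
Unset Strict Implicit.
Unset Printing Implicit Defensive.

Import GRing.Theory.
Local Open Scope ring_scope.

Record preadditive := Preadditive {
  Obj : Type;
  Mor : Obj -> Obj -> zmodType;
  idm : forall A, Mor A A;
  comp : forall A B C, Mor B C -> Mor A B -> Mor A C;
  comp_idl : forall A B (f : Mor A B), comp (idm B) f = f;
  comp_idr : forall A B (f : Mor A B), comp f (idm A) = f;
  compA : forall A B C D (h : Mor C D) (g : Mor B C) (f : Mor A B),
      comp h (comp g f) = comp (comp h g) f;
  comp_addl : forall A B C (g g' : Mor B C) (f : Mor A B),
      comp (g + g') f = comp g f + comp g' f;
  comp_addr : forall A B C (g : Mor B C) (f f' : Mor A B),
      comp g (f + f') = comp g f + comp g f'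
}.
Arguments idm {p} A.
Arguments comp {p A B C} _ _.

Notation "g \oc f" := (comp g f) (at level 40, left associativity).

Section Defs.
Variable X : preadditive.

Definition is_iso (A B : Obj X) (f : Mor A B) : Prop :=
  exists g : Mor B A, g \oc f = idm A /\ f \oc g = idm B.

Definition is_zero_obj (Z : Obj X) : Prop :=
  (forall Y (f : Mor Z Y), f = 0) /\ (forall Y (f : Mor Y Z), f = 0).

Definition is_biproduct (A B P : Obj X) (i1 : Mor A P) (i2 : Mor B P)
  (p1 : Mor P A) (p2 : Mor P B) : Prop :=
  [/\ p1 \oc i1 = idm A, p2 \oc i2 = idm B, p1 \oc i2 = 0, p2 \oc i1 = 0
    & i1 \oc p1 + i2 \oc p2 = idm P].

Definition is_kernel (K B C : Obj X) (i : Mor K B) (d : Mor B C) : Prop :=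
  d \oc i = 0 /\
  forall Y (f : Mor Y B), d \oc f = 0 -> exists! h : Mor Y K, i \oc h = f.

Definition is_cokernel (A B Q : Obj X) (i : Mor A B) (d : Mor B Q) : Prop :=
  d \oc i = 0 /\
  forall Y (f : Mor B Y), f \oc i = 0 -> exists! h : Mor Q Y, h \oc d = f.

Definition kc_pair (A B C : Obj X) (i : Mor A B) (d : Mor B C) : Prop :=
  is_kernel i d /\ is_cokernel i d.

Definition is_pushout (A B C P : Obj X) (f : Mor A B) (g : Mor A C)
  (u : Mor B P) (v : Mor C P) : Prop :=
  u \oc f = v \oc g /\
  forall Y (x : Mor B Y) (y : Mor C Y), x \oc f = y \oc g ->
    exists! h : Mor P Y, h \oc u = x /\ h \oc v = y.

Definition is_pullback (A B C P : Obj X) (f : Mor B A) (g : Mor C A)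
  (u : Mor P B) (v : Mor P C) : Prop :=
  f \oc u = g \oc v /\
  forall Y (x : Mor Y B) (y : Mor Y C), f \oc x = g \oc y ->
    exists! h : Mor Y P, u \oc h = x /\ v \oc h = y.

Definition is_coproduct (I : Type) (F : I -> Obj X) (P : Obj X)
  (inj : forall i, Mor (F i) P) : Prop :=
  forall Y (f : forall i, Mor (F i) Y),
    exists! h : Mor P Y, forall i, h \oc inj i = f i.

Definition is_wide_pushout (I : Type) (B : Obj X) (C : I -> Obj X)
  (m : forall i, Mor B (C i)) (P : Obj X) (mm : Mor B P)
  (u : forall i, Mor (C i) P) : Prop :=
  (forall i, u i \oc m i = mm) /\
  forall Y (x : Mor B Y) (y : forall i, Mor (C i) Y),
    (forall i, y i \oc m i = x) ->
    exists! h : Mor P Y, h \oc mm = x /\ forall i, h \oc u i = y i.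

End Defs.
Arguments is_coproduct {X I} F P inj.
Arguments is_wide_pushout {X I B} C m P mm u.

Record additive := Additive {
  add_pre :> preadditive;
  has_zero : exists Z : Obj add_pre, is_zero_obj Z;
  has_biprod : forall A B : Obj add_pre, exists (P : Obj add_pre)
    (i1 : Mor A P) (i2 : Mor B P) (p1 : Mor P A) (p2 : Mor P B),
    is_biproduct i1 i2 p1 p2
}.

Record exact_category := ExactCategory {
  ex_add :> additive;
  conf : forall A B C : Obj ex_add, Mor A B -> Mor B C -> Prop;
  conf_kc : forall A B C (i : Mor A B) (d : Mor B C), conf i d -> kc_pair i d;
  conf_iso : forall A B C A' B' C' (i : Mor A B) (d : Mor B C)
      (i' : Mor A' B') (d' : Mor B' C')
      (a : Mor A A') (b : Mor B B') (c : Mor C C'),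
      conf i d -> is_iso a -> is_iso b -> is_iso c ->
      i' \oc a = b \oc i -> d' \oc b = c \oc d -> conf i' d';
  infl_id : forall A : Obj ex_add, exists C (d : Mor A C), conf (idm A) d;
  defl_id : forall A : Obj ex_add, exists C (i : Mor C A), conf i (idm A);
  infl_comp : forall A B C (f : Mor A B) (g : Mor B C),
      (exists D (d : Mor B D), conf f d) -> (exists D (d : Mor C D), conf g d) ->
      exists D (d : Mor C D), conf (g \oc f) d;
  defl_comp : forall A B C (f : Mor A B) (g : Mor B C),
      (exists D (i : Mor D A), conf i f) -> (exists D (i : Mor D B), conf i g) ->
      exists D (i : Mor D A), conf i (g \oc f);
  infl_pushout : forall A B A' (i : Mor A B) (f : Mor A A'),
      (exists D (d : Mor B D), conf i d) ->
      exists B' (f' : Mor B B') (i' : Mor A' B'),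
        is_pushout i f f' i' /\ exists D (d : Mor B' D), conf i' d;
  defl_pullback : forall A B C' (d : Mor B A) (g : Mor C' A),
      (exists D (i : Mor D B), conf i d) ->
      exists P (u : Mor P B) (d' : Mor P C'),
        is_pullback d g u d' /\ exists D (i : Mor D P), conf i d'
}.
Arguments conf {e A B C} _ _.

Definition exact_coproducts (X : exact_category) : Prop :=
  (forall (I : Type) (F : I -> Obj X), exists (P : Obj X)
      (inj : forall i, Mor (F i) P), is_coproduct F P inj) /\
  (forall (I : Type) (A B C : I -> Obj X)
      (m : forall i, Mor (A i) (B i)) (p : forall i, Mor (B i) (C i)),
      (forall i, conf (m i) (p i)) ->
      forall (PA PB PC : Obj X) (iA : forall i, Mor (A i) PA)
        (iB : forall i, Mor (B i) PB) (iC : forall i, Mor (C i) PC),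
        is_coproduct A PA iA -> is_coproduct B PB iB -> is_coproduct C PC iC ->
      forall (M : Mor PA PB) (Pp : Mor PB PC),
        (forall i, M \oc iA i = iB i \oc m i) ->
        (forall i, Pp \oc iB i = iC i \oc p i) ->
        conf M Pp).

(* Pushing the coproduct conflation B^(I) -> coprod C^i -> coprod A^i out along
   the codiagonal s : B^(I) -> B gives an inflation B -> P whose cokernel is
   still coprod A^i.  Since s splits every coproduct injection, a cocone under
   the family (m^i) is the same as a cocone under the square formed by
   coprod m^i and s, so P is also the wide pushout of the m^i. *)
From Pilot Require Import Defs.
From HB Require Import structures.
From mathcomp Require Import all_boot all_algebra.

Set Implicit Arguments.
Unset Strict Implicit.

Import GRing.Theory.
Local Open Scope ring_scope.

Lemma ex_uniq_eq {T : Type} {P : T -> Prop} {x y : T} :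
  (exists! h, P h) -> P x -> P y -> x = y.
Proof. by move=> [h [_ Hh]] Px Py; rewrite -(Hh _ Px) -(Hh _ Py). Qed.

Section Preadditive.
Variable X : preadditive.

Lemma comp0l (A B C : Obj X) (f : Mor A B) : (0 : Mor B C) \oc f = 0.
Proof.
have H := comp_addl (0 : Mor B C) 0 f; rewrite addr0 in H.
by apply/(addrI ((0 : Mor B C) \oc f)); rewrite addr0 -H.
Qed.

Lemma comp0r (A B C : Obj X) (g : Mor B C) : g \oc (0 : Mor A B) = 0.
Proof.
have H := comp_addr g (0 : Mor A B) 0; rewrite addr0 in H.
by apply/(addrI (g \oc (0 : Mor A B))); rewrite addr0 -H.
Qed.

Lemma idm_iso (A : Obj X) : is_iso (idm A).
Proof. by exists (idm A); rewrite comp_idl. Qed.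

Lemma cokernel_iso (A B Q Q' : Obj X) (i : Mor A B)
    (d : Mor B Q) (d' : Mor B Q') :
  is_cokernel i d -> is_cokernel i d' ->
  exists c : Mor Q Q', is_iso c /\ c \oc d = d'.
Proof.
move=> [d0 Hd] [d0' Hd'].
have [c [Hc _]] := Hd _ d' d0'.
have [c' [Hc' _]] := Hd' _ d d0.
exists c; split=> //; exists c'; split.
- apply: (ex_uniq_eq (Hd _ d d0)); last exact: comp_idl.
  by rewrite -Defs.compA Hc Hc'.
- apply: (ex_uniq_eq (Hd' _ d' d0')); last exact: comp_idl.
  by rewrite -Defs.compA Hc' Hc.
Qed.

Lemma pushout_cokernel (A B C P Q : Obj X) (f : Mor A B) (g : Mor A C)
    (u : Mor B P) (v : Mor C P) (d : Mor B Q) (q : Mor P Q) :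
  is_pushout f g u v -> is_cokernel f d ->
  q \oc u = d -> q \oc v = 0 -> is_cokernel v q.
Proof.
move=> [Hsq Hpo] [_ Hd] Hqu Hqv; split=> // Y h Hhv.
have Hhuf : (h \oc u) \oc f = 0 by rewrite -Defs.compA Hsq Defs.compA Hhv comp0l.
have [k [Hk Huniq]] := Hd _ _ Hhuf.
have Hhu : (h \oc u) \oc f = (h \oc v) \oc g by rewrite Hhv comp0l.
exists k; split.
  apply: (ex_uniq_eq (Hpo _ _ _ Hhu)); last by [].
  by rewrite -!Defs.compA Hqu Hqv comp0r Hk.
by move=> k' Hk'; apply: Huniq; rewrite -Hk' -Defs.compA Hqu.
Qed.

Section CodiagonalPushout.
Variables (I : Type) (B : Obj X) (C : I -> Obj X) (m : forall i, Mor B (C i)).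
Variables (BI : Obj X) (iB : forall i : I, Mor B BI).
Hypothesis HBI : is_coproduct (fun _ : I => B) BI iB.
Variables (CI : Obj X) (iC : forall i, Mor (C i) CI).
Hypothesis HCI : is_coproduct C CI iC.
Variable s : Mor BI B.
Hypothesis Hs : forall i, s \oc iB i = idm B.
Variable mI : Mor BI CI.
Hypothesis HmI : forall i, mI \oc iB i = iC i \oc m i.

Lemma codiagonal_pushout_wide_pushout (P : Obj X) (g : Mor CI P) (mm : Mor B P) :
  is_pushout mI s g mm -> is_wide_pushout C m P mm (fun i => g \oc iC i).
Proof.
move=> [Hsq Hpo]; split=> [i|Y x y Hy].
  by rewrite -Defs.compA -HmI Defs.compA Hsq -Defs.compA Hs comp_idr.
have [yy [Hyy _]] := HCI y.
have Hyx : yy \oc mI = x \oc s.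
  apply: (ex_uniq_eq (HBI (fun _ => x))) => i.
    by rewrite -Defs.compA HmI Defs.compA Hyy Hy.
  by rewrite -Defs.compA Hs comp_idr.
have [h [[Hhg Hhm] Hu]] := Hpo _ _ _ Hyx.
exists h; split.
  by split=> // i; rewrite Defs.compA Hhg Hyy.
move=> h' [Hm' Hc']; apply: Hu; split=> //.
by apply: (ex_uniq_eq (HCI y)) => i; rewrite ?Hyy // -Defs.compA Hc'.
Qed.

End CodiagonalPushout.
End Preadditive.
Arguments comp0l {X A B C} f.

Lemma conf_cokernel (X : exact_category) (A B Q : Obj X)
    (i : Mor A B) (d : Mor B Q) (Q' : Obj X) (d' : Mor B Q') :
  conf i d -> is_cokernel i d' -> conf i d'.
Proof.
move=> cid Hd'.
have [_ Hd] := conf_kc cid.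
have [c [ci Hc]] := cokernel_iso Hd Hd'.
apply: (conf_iso cid (idm_iso _) (idm_iso _) ci); by rewrite ?comp_idl ?comp_idr.
Qed.

Theorem lemma5p1 (X : exact_category) (HX : exact_coproducts X)
  (I : Type) (B : Obj X) (C A : I -> Obj X)
  (m : forall i, Mor B (C i)) (p : forall i, Mor (C i) (A i))
  (Hconf : forall i, conf (m i) (p i))
  (BI : Obj X) (iB : forall i : I, Mor B BI)
  (HBI : is_coproduct (fun _ : I => B) BI iB)
  (CI : Obj X) (iC : forall i, Mor (C i) CI) (HCI : is_coproduct C CI iC)
  (AI : Obj X) (iA : forall i, Mor (A i) AI) (HAI : is_coproduct A AI iA)
  (s : Mor BI B) (Hs : forall i, s \oc iB i = idm B)
  (mI : Mor BI CI) (HmI : forall i, mI \oc iB i = iC i \oc m i)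
  (pI : Mor CI AI) (HpI : forall i, pI \oc iC i = iA i \oc p i) :
  exists (P : Obj X) (mm : Mor B P) (g : Mor CI P) (q : Mor P AI),
    [/\ is_pushout mI s g mm,
        conf mm q,
        q \oc g = pI
      & is_wide_pushout C m P mm (fun i => g \oc iC i)].
Proof.
have cI : conf mI pI := HX.2 I _ C A m p Hconf _ _ _ _ _ _ HBI HCI HAI _ _ HmI HpI.
have [[pIm0 _] [_ pIcok]] := conf_kc cI.
have [P [g [mm [Hpo [D [d cd]]]]]] := infl_pushout s (ex_intro _ _ (ex_intro _ _ cI)).
have [q [[Hqg Hqm] _]] := Hpo.2 _ pI (0 : Mor B AI) (etrans pIm0 (esym (comp0l _))).
exists P, mm, g, q; split=> //.
- apply: (conf_cokernel cd).
  exact: pushout_cokernel Hpo (conj pIm0 pIcok) Hqg Hqm.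
- exact: (codiagonal_pushout_wide_pushout HBI HCI Hs HmI Hpo).
Qed.
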